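(* Any tabular RL algorithm $\mathscr{A}$ with sample complexity $\mathcal{C}(\epsilon,\delta)$ is $\epsilon/(4H)$-robust with sample complexity $\mathcal{C}(\epsilon/2,\delta)$.
   Context: Tabular episodic MDP (finite $\mathcal{S},\mathcal{A}$) with horizon $H$ and per-step reward $r(s,a)$; value $V^{\pi,r}=\mathbb{E}_\pi[\sum_{h=1}^H r(s_h,a_h)]$; $\pi$ is $\epsilon$-optimal if $V^{\pi,r}\ge\max_{\pi'}V^{\pi',r}-\epsilon$. An RL algorithm has sample complexity $\mathcal{C}(\epsilon,\delta)$ if for any reward function it outputs an $\epsilon$-optimal policy using $\mathcal{C}(\epsilon,\delta)$ episodes with probability at least $1-\delta$. It is $g(\epsilon)$-robust with sample complexity $\mathcal{C}(\epsilon,\delta)$ if it outputs a policy that is $\epsilon$-optimal for $r$ using $\mathcal{C}(\epsilon,\delta)$ samples with probability at least $1-\delta$ even when the rewards it observes are those of a perturbed reward $r+\varepsilon$ with $\|\varepsilon\|_\infty\le g(\epsilon)$ (the perturbation being a fixed function of the state–action pair). *)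

From HB Require Import structures.
From mathcomp Require Import all_boot all_order all_algebra.
From mathcomp Require Import all_classical all_reals all_analysis.
Set Implicit Arguments. Unset Strict Implicit. Unset Printing Implicit Defensive.
Import Order.TTheory GRing.Theory Num.Theory.
Local Open Scope ring_scope.
Local Open Scope classical_set_scope.

Section TabularMDP.
Variables (R : realType) (S A : finType) (H : nat).

Definition reward := S -> A -> R.
(* A (non-stationary, randomized, Markov) policy: pi h s a = prob. of action a
   in state s at step h (steps are 0,...,H-1). *)
Definition policy := nat -> S -> A -> R.

Definition is_distr (T : finType) (p : T -> R) :=
  (forall x, 0 <= p x) /\ \sum_(x : T) p x = 1.

Definition is_policy (pi : policy) :=
  forall h, (h < H)%N -> forall s, is_distr (pi h s).

Definition is_mdp (mu : S -> R) (P : nat -> S -> A -> S -> R) :=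
  is_distr mu /\ forall h, (h < H)%N -> forall s a, is_distr (P h s a).

(* Expected sum of rewards over the remaining k steps starting at step h in s. *)
Fixpoint Vrem (P : nat -> S -> A -> S -> R) (pi : policy) (r : reward)
    (k h : nat) (s : S) : R :=
  match k with
  | 0 => 0
  | k'.+1 => \sum_(a : A) pi h s a *
        (r s a + \sum_(s' : S) P h s a s' * Vrem P pi r k' h.+1 s')
  end.

Definition value (mu : S -> R) (P : nat -> S -> A -> S -> R)
    (pi : policy) (r : reward) : R :=
  \sum_(s : S) mu s * Vrem P pi r H 0 s.

Definition eps_optimal mu P (r : reward) (pi : policy) (eps : R) :=
  is_policy pi /\
  forall pi', is_policy pi' -> value mu P pi' r - eps <= value mu P pi r.

(* "the event E holds with probability at least p" (inner probability, so
   no measurability assumption on E is needed). *)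
Definition with_prob_ge d (Omega : measurableType d) (Pr : probability Omega R)
    (E : set Omega) (p : R) :=
  exists2 F : set Omega, measurable F /\ F `<=` E & (p%:E <= Pr F)%E.

(* An RL algorithm run with input parameters (eps, delta) interacting with the
   MDP and observing rewards robs; all randomness (transitions + internal coins)
   is omega.  It returns (number of episodes used, output policy). *)
Definition algorithm d (Omega : measurableType d) :=
  R -> R -> reward -> Omega -> nat * policy.

Definition has_sample_complexity mu P d (Omega : measurableType d)
    (Pr : probability Omega R) (Alg : algorithm Omega) (C : R -> R -> nat) :=
  forall eps delta, 0 < eps -> 0 < delta < 1 -> forall r : reward,
    with_prob_ge Pr
      [set w | ((Alg eps delta r w).1 <= C eps delta)%N /\
               eps_optimal mu P r (Alg eps delta r w).2 eps]
      (1 - delta).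

Definition robust mu P d (Omega : measurableType d)
    (Pr : probability Omega R) (Alg : algorithm Omega) (g : R -> R)
    (C : R -> R -> nat) :=
  forall eps delta, 0 < eps -> 0 < delta < 1 ->
  exists eps_in delta_in : R,
  forall (r pert : reward), (forall s a, `|pert s a| <= g eps) ->
    with_prob_ge Pr
      [set w | ((Alg eps_in delta_in (fun s a => (r s a + pert s a)%R) w).1
                  <= C eps delta)%N /\
               eps_optimal mu P r
                 (Alg eps_in delta_in (fun s a => (r s a + pert s a)%R) w).2 eps]
      (1 - delta).

End TabularMDP.

From HB Require Import structures.
From mathcomp Require Import all_boot all_order all_algebra.
From mathcomp Require Import all_classical all_reals all_analysis.
From mathcomp Require Import ring lra.
Set Implicit Arguments. Unset Strict Implicit. Unset Printing Implicit Defensive.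
Import Order.TTheory GRing.Theory Num.Theory.
Local Open Scope ring_scope.

(* Values are linear in the reward, and a reward perturbation of sup-norm at
   most g moves the value of every policy by at most H g.  With g = eps/(4H),
   running the algorithm at accuracy eps/2 on the perturbed rewards yields a
   policy whose true suboptimality is at most eps/2 + 2 (eps/4) = eps. *)

Section Perturbation.
Variables (R : realType) (S A : finType) (H : nat).

Lemma norm_expect_le (T : finType) (p f : T -> R) (c : R) :
  is_distr p -> (forall x, `|f x| <= c) -> `|\sum_x p x * f x| <= c.
Proof.
move=> [p_ge0 p_sum1] f_le; apply: (le_trans (ler_norm_sum _ _ _)).
rewrite -[c]mul1r -p_sum1 mulr_suml; apply: ler_sum => x _.
by rewrite normrM ger0_norm // ler_wpM2l.
Qed.

Lemma Vrem_rewardD (P : nat -> S -> A -> S -> R) (pi : policy R S A)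
    (r q : reward R S A) k h s :
  Vrem P pi (fun s a => r s a + q s a) k h s =
  Vrem P pi r k h s + Vrem P pi q k h s.
Proof.
elim: k h s => [|k IH] h s /=; first by rewrite addr0.
rewrite -big_split /=; apply: eq_bigr => a _; rewrite -mulrDr; congr (_ * _).
under eq_bigr => s' _ do rewrite IH mulrDr.
by rewrite big_split /=; ring.
Qed.

Lemma value_rewardD (mu : S -> R) (P : nat -> S -> A -> S -> R)
    (pi : policy R S A) (r q : reward R S A) :
  value H mu P pi (fun s a => r s a + q s a) =
  value H mu P pi r + value H mu P pi q.
Proof.
by rewrite /value -big_split; apply: eq_bigr => s _; rewrite Vrem_rewardD mulrDr.
Qed.

Variables (P : nat -> S -> A -> S -> R) (pi : policy R S A).
Hypothesis P_distr : forall h, (h < H)%N -> forall s a, is_distr (P h s a).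
Hypothesis pi_policy : is_policy H pi.

Lemma Vrem_norm_le (q : reward R S A) (g : R) k h s :
  (forall s a, `|q s a| <= g) -> (h + k <= H)%N ->
  `|Vrem P pi q k h s| <= k%:R * g.
Proof.
move=> q_le; elim: k h s => [|k IH] h s hk /=; first by rewrite normr0 mul0r.
have h_lt : (h < H)%N by rewrite (leq_trans _ hk) // -addn1 leq_add2l.
rewrite -[k.+1]addn1 natrD mulrDl mul1r addrC.
apply: norm_expect_le => [|a]; first exact: pi_policy.
apply: (le_trans (ler_normD _ _)); apply: lerD; first exact: q_le.
apply: norm_expect_le => [|s']; first exact: P_distr.
by apply: IH; rewrite addSnnS.
Qed.

Lemma value_perturb_le (mu : S -> R) (r q : reward R S A) (g : R) :
  is_distr mu -> (forall s a, `|q s a| <= g) ->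
  `|value H mu P pi (fun s a => r s a + q s a) - value H mu P pi r| <= H%:R * g.
Proof.
move=> mu_distr q_le; rewrite value_rewardD addrAC subrr add0r.
by apply: norm_expect_le => // s; apply: Vrem_norm_le.
Qed.

End Perturbation.

Lemma eps_optimal_perturb (R : realType) (S A : finType) (H : nat)
    (mu : S -> R) (P : nat -> S -> A -> S -> R) (r r' : reward R S A)
    (pi : policy R S A) (eps c : R) :
  (forall pi', is_policy H pi' -> `|value H mu P pi' r' - value H mu P pi' r| <= c) ->
  eps_optimal H mu P r' pi eps -> eps_optimal H mu P r pi (eps + 2 * c).
Proof.
move=> close [pi_policy opt]; split => // pi' pi'_policy.
have := opt _ pi'_policy.
move: (close _ pi_policy) (close _ pi'_policy); rewrite !ler_norml.
by move=> /andP[? ?] /andP[? ?] ?; lra.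
Qed.

Lemma with_prob_ge_sub d (Omega : measurableType d) (R : realType)
    (Pr : probability Omega R) (E E' : set Omega) (p : R) :
  (E `<=` E')%classic -> with_prob_ge Pr E p -> with_prob_ge Pr E' p.
Proof.
move=> EE' [F [mF FE] PF]; exists F => //; split => //.
exact: subset_trans EE'.
Qed.

Theorem lemma6 (R : realType) (S A : finType) (H : nat) (hH : (0 < H)%N)
    (mu : S -> R) (P : nat -> S -> A -> S -> R) (hP : is_mdp H mu P)
    (d : measure_display) (Omega : measurableType d)
    (Pr : probability Omega R) (Alg : algorithm R S A Omega)
    (C : R -> R -> nat) :
  has_sample_complexity H mu P Pr Alg C ->
  robust H mu P Pr Alg (fun eps => eps / (4 * H%:R))
    (fun eps delta => C (eps / 2) delta).
Proof.
move=> complexity eps delta eps_gt0 delta_range.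
exists (eps / 2), delta => r q q_le.
have [mu_distr P_distr] := hP.
have half_gt0 : 0 < eps / 2 by rewrite divr_gt0.
apply: with_prob_ge_sub
  (complexity _ _ half_gt0 delta_range (fun s a => r s a + q s a)).
move=> w [episodes_le opt]; split => //.
have eps_split : eps / 2 + 2 * (H%:R * (eps / (4 * H%:R))) = eps.
  by field; rewrite pnatr_eq0 -lt0n.
rewrite -[X in eps_optimal _ _ _ _ _ X]eps_split.
apply: eps_optimal_perturb opt => pi' pi'_policy.
exact (value_perturb_le P_distr pi'_policy r mu_distr q_le).
Qed.
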